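(* Let $G=(V,E)$ be a hypergraph and let $(U,\overline U)$ be a minimal balanced minimum $k$-partition split in $G$ for some integer $k\ge2$. Then for every vertex $u_0\in U$ there exist subsets $S\subseteq U\setminus\{u_0\}$ and $T\subseteq\overline U$ with $|S|\le 2k-3$ and $|T|\le 2k-2$ such that $(U,\overline U)$ is the source minimal minimum $(S\cup\{u_0\},T)$-terminal cut in $G$.
   Context: A hypergraph $G=(V,E)$ has finite vertex set $V$ and finite multiset $E$ of unit-cost hyperedges (subsets of $V$). For $X\subseteq V$, $\overline X=V\setminus X$ and $d(X)$ is the number of hyperedges meeting both $X$ and $\overline X$. The cost of an (ordered) partition of $V$ into non-empty parts is the number of hyperedges meeting at least two parts; a minimum $k$-partition is a $k$-partition of minimum cost. A 2-partition $(U,\overline U)$ is a balanced minimum $k$-partition split if there is a minimum $k$-partition $(V_1,\dots,V_k)$ with $U=\bigcup_{i=1}^{\lfloor k/2\rfloor}V_i$; it is minimal if there is no balanced minimum $k$-partition split $(U',\overline{U'})$ with $U'\subsetneq U$. For disjoint $S,T\subseteq V$, a 2-partition $(X,\overline X)$ is an $(S,T)$-terminal cut if $S\subseteq X\subseteq V\setminus T$; it is minimum if $d(X)$ is minimum among such cuts; the source minimal minimum $(S,T)$-terminal cut is the unique minimum one whose source set $X$ is inclusion-wise minimal. *)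

From mathcomp Require Import all_boot.
Set Implicit Arguments. Unset Strict Implicit. Unset Printing Implicit Defensive.

(* A hypergraph on a finite vertex type V is a multiset of hyperedges,
   represented as a list E : seq {set V}; every hyperedge has unit cost. *)

Section Hyper.
Variable V : finType.
Variable E : seq {set V}.

Definition dcut (X : {set V}) : nat :=
  count (fun e : {set V} => (e :&: X != set0) && (e :&: ~: X != set0)) E.

Definition is_kpartition (k : nat) (P : 'I_k -> {set V}) : Prop :=
  (forall i, P i != set0) /\
  (forall i j, i != j -> [disjoint P i & P j]) /\
  (\bigcup_(i < k) P i = [set: V]).

Definition kcost (k : nat) (P : 'I_k -> {set V}) : nat :=
  count (fun e : {set V} => 2 <= #|[set i : 'I_k | e :&: P i != set0]|) E.

Definition is_min_kpartition (k : nat) (P : 'I_k -> {set V}) : Prop :=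
  is_kpartition P /\ forall Q : 'I_k -> {set V}, is_kpartition Q -> kcost P <= kcost Q.

Definition balanced_split (k : nat) (U : {set V}) : Prop :=
  exists P : 'I_k -> {set V},
    is_min_kpartition P /\ U = \bigcup_(i < k | i < k./2) P i.

Definition minimal_balanced_split (k : nat) (U : {set V}) : Prop :=
  balanced_split k U /\ ~ (exists U' : {set V}, balanced_split k U' /\ U' \proper U).

Definition terminal_cut (S T X : {set V}) : Prop :=
  X != set0 /\ X != [set: V] /\ S \subset X /\ X \subset ~: T.

Definition min_terminal_cut (S T X : {set V}) : Prop :=
  terminal_cut S T X /\ forall Y, terminal_cut S T Y -> dcut X <= dcut Y.

Definition source_minimal_min_terminal_cut (S T X : {set V}) : Prop :=
  min_terminal_cut S T X /\
  forall Y, min_terminal_cut S T Y -> ~ (Y \proper X).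

End Hyper.

From mathcomp Require Import all_boot zify.
Set Implicit Arguments. Unset Strict Implicit. Unset Printing Implicit Defensive.

(* Let c = d(U) and call a nonempty D inside U - u0 removable when d(U - D) <= c.
   A set S meeting every removable D pins U from below: every Y containing u0 + S
   with d(Y ∩ U) <= c contains U.  Dually, with threshold c - 1 and a vertex t0
   outside U, a set T pins U from above, and submodularity of d then makes U the
   source minimal minimum (u0 + S, T)-terminal cut.
   A minimum hitting set H of the removable sets has fewer than 2k - 2 elements:
   otherwise minimality gives removable D_h with D_h ∩ H = {h} for 2k - 2 points h.
   Their private parts yield two k-partitions (k - 1 private parts plus the rest
   of V), and a hyperedge-by-hyperedge uncrossing of the sets U - D_h into the sets
   of vertices covered at least t times (t >= 3) shows that the two partitions
   together cost at most 2c, since each D_h costs at most c while each level set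
   misses H and so costs at least c.  The cheaper partition is then a minimum
   k-partition whose balanced split lies in U - u0, contradicting minimality. *)

Lemma count_sumE (T : Type) (p : pred T) (s : seq T) : count p s = \sum_(x <- s) p x.
Proof. by rewrite -sum1_count big_mkcond; apply: eq_bigr => x _; case: (p x). Qed.

Lemma sum_boolE (I : finType) (p : pred I) : \sum_(i : I) p i = #|[set i | p i]|.
Proof.
rewrite -sum1dep_card [RHS]big_mkcond; apply: eq_bigr => i _; by case: (p i).
Qed.

Lemma sum_window_le (f : nat -> bool) a n m M :
  (forall t, a <= t < n -> f t -> m < t <= M) -> \sum_(a <= t < n) f t <= M - m.
Proof.
move=> fP; suff : \sum_(a <= t < n) f t <= minn n M.+1 - m.+1 by lia.
elim: n fP => [|n IH] fP; first by rewrite big_geq.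
have [an|na] := leqP a n; last by rewrite big_geq.
rewrite big_nat_recr //=.
have {}IH : \sum_(a <= t < n) f t <= minn n M.+1 - m.+1.
  by apply: IH => t /andP[ant tn]; apply: fP; rewrite ant ltnW.
case fn: (f n); last by rewrite addn0; apply: leq_trans IH _; lia.
have := fP n; rewrite an leqnn fn => /(_ isT isT) /andP[mn nM]; lia.
Qed.

Section Crossing.
Variable V : finType.
Implicit Types (e A X Y : {set V}).

Definition meets e X := e :&: X != set0.
Definition crosses e X := meets e X && meets e (~: X).

Lemma meetsP e X : reflect (exists2 v, v \in e & v \in X) (meets e X).
Proof.
apply: (iffP (set0Pn _)) => [[v]|[v ve vX]]; last by exists v; rewrite inE ve vX.
by rewrite inE => /andP[]; exists v.
Qed.

Lemma meetsU e X Y : meets e (X :|: Y) = meets e X || meets e Y.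
Proof. by rewrite /meets setIUr -negb_and setU_eq0. Qed.

Lemma meets_subset e X Y : X \subset Y -> meets e X -> meets e Y.
Proof. by move=> /subsetP sXY /meetsP[v ve /sXY vY]; apply/meetsP; exists v. Qed.

Lemma meetsC e X : meets e (~: X) = ~~ (e \subset X).
Proof. by rewrite /meets -setDE setD_eq0. Qed.

Lemma crossesC e X : crosses e (~: X) = crosses e X.
Proof. by rewrite /crosses setCK andbC. Qed.

Lemma crossesE e X : crosses e X = meets e X && ~~ (e \subset X).
Proof. by rewrite /crosses meetsC. Qed.

Lemma crosses_setD e A X : e \subset A -> crosses e (A :\: X) = crosses e X.
Proof.
move=> eA; rewrite /crosses andbC; congr (_ && _).
  by rewrite setDE setCI setCK meetsU meetsC eA.
by rewrite /meets setDE setIA (setIidPl eA).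
Qed.

Lemma crosses_submod e X Y :
  crosses e (X :&: Y) + crosses e (X :|: Y) <= crosses e X + crosses e Y.
Proof.
have split Z W : meets e Z = meets e (Z :&: W) || meets e (Z :&: ~: W).
  by rewrite -meetsU -setIUr setUCr setIT.
rewrite /crosses setCI setCU !meetsU (split X Y) (split (~: X) Y).
rewrite (split Y X) (split (~: Y) X) !(setIC Y) !(setIC (~: Y)).
by case: (meets e (X :&: Y)); case: (meets e (X :&: ~: Y));
   case: (meets e (~: X :&: Y)); case: (meets e (~: X :&: ~: Y)).
Qed.

End Crossing.

Section CutFunction.
Variables (V : finType) (E : seq {set V}).
Implicit Types (X Y : {set V}).

Lemma dcut_sumE X : dcut E X = \sum_(e <- E) crosses e X.
Proof. exact: count_sumE. Qed.

Lemma dcutC X : dcut E (~: X) = dcut E X.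
Proof. by rewrite !dcut_sumE; apply: eq_bigr => e _; rewrite crossesC. Qed.

Lemma dcut_submod X Y : dcut E (X :&: Y) + dcut E (X :|: Y) <= dcut E X + dcut E Y.
Proof. by rewrite !dcut_sumE -!big_split; apply: leq_sum => e _; apply: crosses_submod. Qed.

Lemma dcut_bigcup_le_kcost k (P : 'I_k -> {set V}) (J : pred 'I_k) :
  is_kpartition P -> dcut E (\bigcup_(i | J i) P i) <= kcost E P.
Proof.
move=> [_ [_ coverP]]; apply: sub_count => e /andP[].
case/set0Pn => v; rewrite inE => /andP[ve /bigcupP[i Ji vi]].
case/set0Pn => w; rewrite !inE => /andP[we wJ].
have /bigcupP[i' _ wi'] : w \in \bigcup_(i < k) P i by rewrite coverP.
apply/card_gt1P; exists i, i'; rewrite !inE; split.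
- by apply/set0Pn; exists v; rewrite inE ve vi.
- by apply/set0Pn; exists w; rewrite inE we wi'.
- by apply: contra wJ => /eqP ii'; apply/bigcupP; exists i; rewrite // ii'.
Qed.

End CutFunction.

Lemma exists_extrema (T : finType) (X : {set T}) (f : T -> nat) : X != set0 ->
  exists vlo vhi, [/\ vlo \in X, vhi \in X & forall v, v \in X -> f vlo <= f v <= f vhi].
Proof.
case/set0Pn => v0 Xv0.
case: (@arg_minnP _ v0 (fun v => v \in X) f Xv0) => vlo Xvlo minlo.
case: (@arg_maxnP _ v0 (fun v => v \in X) f Xv0) => vhi Xvhi maxhi.
by exists vlo, vhi; split => // v Xv; rewrite minlo //; apply: maxhi.
Qed.

Section Ply.
Variables (V I : finType) (A : {set V}) (D : I -> {set V}).
Hypothesis DA : forall i, D i \subset A.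
Implicit Types (e : {set V}) (v : V) (i l : I).

Definition private_part i := D i :\: \bigcup_(l | l != i) D l.
Definition ply v := #|[set i | v \in D i]|.
Definition level t := [set v | t <= ply v].
Definition private_excess e := minn 2 #|[set i | crosses e (private_part i)]|.

Lemma private_part_sub i : private_part i \subset D i.
Proof. exact: subsetDl. Qed.

Lemma private_part_subA i : private_part i \subset A.
Proof. exact: subset_trans (private_part_sub i) (DA i). Qed.

Lemma notin_private_part i l v : v \in private_part i -> l != i -> v \notin D l.
Proof. by rewrite inE => /andP[vU _] li; apply: contra vU => vl; apply/bigcupP; exists l. Qed.

Lemma in_private_part_eq i i' v : v \in private_part i' -> v \in D i -> i' = i.
Proof.
by move=> vi' vi; apply/eqP; rewrite eq_sym; apply: contraTT vi; apply: notin_private_part.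
Qed.

Lemma private_part_disjoint i i' : i != i' -> [disjoint private_part i & private_part i'].
Proof.
move=> ii'; rewrite -setI_eq0; apply/set0Pn => -[v /setIP[vi vi']].
by move: ii'; rewrite (in_private_part_eq vi (subsetP (private_part_sub i') v vi')) eqxx.
Qed.

Lemma ply_private_part i v : v \in private_part i -> ply v = 1.
Proof.
move=> vi; apply/eqP/cards1P; exists i; apply/setP => l; rewrite !inE.
apply/idP/eqP => [vl|->]; last exact: subsetP (private_part_sub i) v vi.
by apply/eqP; apply: contraLR vl; apply: notin_private_part.
Qed.

Lemma ply_gt1 i v : v \in D i -> v \notin private_part i -> 1 < ply v.
Proof.
rewrite inE negb_and negbK => vi; rewrite vi orbF => /bigcupP[l li vl].
by apply/card_gt1P; exists i, l; rewrite !inE vi vl eq_sym.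
Qed.

Lemma private_excess_eq0 e :
  ~~ [exists i, crosses e (private_part i)] -> private_excess e = 0.
Proof.
move=> none; rewrite /private_excess (_ : [set i | _] = set0) ?cards0 //.
by apply/setP => i; rewrite !inE; apply: contraNF none => ci; apply/existsP; exists i.
Qed.

Lemma level_sub (X : {set V}) t : (forall i, D i \subset X) -> 0 < t -> level t \subset X.
Proof.
move=> DX t0; apply/subsetP => v; rewrite inE => /(leq_trans t0); rewrite card_gt0.
by case/set0Pn => i; rewrite inE; apply: (subsetP (DX i)).
Qed.

Lemma crosses_level_lt e t vlo :
  (forall v, v \in e -> v \in A -> ply vlo <= ply v) ->
  crosses e (A :\: level t) -> ply vlo < t.
Proof.
move=> vlo_min /andP[/meetsP[v ve] + _]; rewrite !inE -ltnNge => /andP[vt vA].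
exact: leq_ltn_trans (vlo_min v ve vA) vt.
Qed.

Lemma crosses_level_le e t vhi : e \subset A ->
  (forall v, v \in e -> ply v <= ply vhi) ->
  crosses e (A :\: level t) -> t <= ply vhi.
Proof.
move=> eA vhi_max; rewrite crosses_setD // => /andP[/meetsP[v ve] + _].
by rewrite inE => /leq_trans; apply; apply: vhi_max.
Qed.

Lemma excess_levels_le_outer e : 2 <= #|I| -> meets e A -> meets e (~: A) ->
  private_excess e + \sum_(3 <= t < #|I|.+1) crosses e (A :\: level t)
    <= #|[set i | crosses e (A :\: D i)]|.
Proof.
move=> I2 eA eOut.
have [vlo [vhi [/setIP[vlo_e vlo_A] _ vlo_min]]] := exists_extrema ply eA.
have {vhi}vlo_min v : v \in e -> v \in A -> ply vlo <= ply v.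
  by move=> ve vA; have := vlo_min v; rewrite inE ve vA => /(_ isT)/andP[].
set inside := [set i | e :&: A \subset D i].
have inside_le : #|inside| <= ply vlo.
  apply: subset_leq_card; apply/subsetP => i; rewrite !inE => /subsetP; apply.
  exact/setIP.
have outside_cross : #|I| - #|inside| <= #|[set i | crosses e (A :\: D i)]|.
  apply: (@leq_trans #|~: inside|); first by have := cardsC inside; lia.
  apply: subset_leq_card; apply/subsetP => i.
  rewrite !inE => /subsetPn[v /setIP[ve vA] vD]; apply/andP; split.
    by apply/meetsP; exists v; rewrite // inE vD.
  by apply: meets_subset eOut; rewrite setCS subsetDl.
have levels_le :
    \sum_(3 <= t < #|I|.+1) crosses e (A :\: level t) <= #|I| - maxn (ply vlo) 2.
  apply: sum_window_le => t /andP[t3 tI] /(crosses_level_lt vlo_min) lo_t.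
  by rewrite gtn_max lo_t t3 -ltnS.
have [/existsP[i1 /andP[/meetsP[v1 v1e v1i1] _]]|no_private] :=
  boolP [exists i, crosses e (private_part i)]; last first.
  by rewrite private_excess_eq0 // add0n; apply: leq_trans levels_le _; lia.
have v1A : v1 \in A := subsetP (private_part_subA i1) v1 v1i1.
have lo_le1 : ply vlo <= 1 by rewrite -(ply_private_part v1i1); apply: vlo_min.
have inside_unique i i' : i \in inside -> meets e (private_part i') -> i' = i.
  rewrite inE => /subsetP eAi /meetsP[v ve vi'].
  have vA := subsetP (private_part_subA i') v vi'.
  exact: in_private_part_eq vi' (eAi v (introT setIP (conj ve vA))).
have excess_le : private_excess e + #|inside| <= 2.
  have : inside \subset [set i1].
    have e_i1 : meets e (private_part i1) by apply/meetsP; exists v1.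
    by apply/subsetP => i /inside_unique/(_ e_i1) ->; rewrite inE.
  rewrite subset1 => /orP[] /eqP inside_eq; last by rewrite inside_eq cards0 addn0 geq_minl.
  rewrite inside_eq cards1 /private_excess -[2]/(1 + 1) leq_add2r.
  apply: leq_trans (geq_minr _ _) _; rewrite -(cards1 i1); apply: subset_leq_card.
  have i1_inside : i1 \in inside by rewrite inside_eq inE.
  by apply/subsetP => i; rewrite !inE => /andP[/(inside_unique _ _ i1_inside) -> _].
lia.
Qed.

Lemma levels_le_inner e : e \subset A -> e != set0 ->
  \sum_(3 <= t < #|I|.+1) crosses e (A :\: level t) <= #|[set i | crosses e (D i)]|.
Proof.
move=> eA e0; have [vlo [vhi [vlo_e vhi_e ext]]] := exists_extrema ply e0.
have levels_le : \sum_(3 <= t < #|I|.+1) crosses e (A :\: level t) <= ply vhi - ply vlo.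
  apply: sum_window_le => t _ ct; apply/andP; split.
    by apply: crosses_level_lt ct => v ve _; case/andP: (ext v ve).
  by apply: crosses_level_le ct => // v ve; case/andP: (ext v ve).
set Dhi := [set i | vhi \in D i]; set Dlo := [set i | vlo \in D i].
have := cardsID Dlo Dhi; have := subset_leq_card (subsetIr Dhi Dlo).
have : #|Dhi :\: Dlo| <= #|[set i | crosses e (D i)]|.
  apply: subset_leq_card; apply/subsetP => i; rewrite !inE crossesE => /andP[lo hi].
  apply/andP; split; first by apply/meetsP; exists vhi.
  by apply/subsetPn; exists vlo.
rewrite /ply -/Dhi -/Dlo in levels_le *; lia.
Qed.

Lemma excess_levels_le_inner e i1 : e \subset A -> crosses e (private_part i1) ->
  private_excess e + \sum_(3 <= t < #|I|.+1) crosses e (A :\: level t)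
    <= #|[set i | crosses e (D i)]|.
Proof.
rewrite crossesE => eA /andP[/meetsP[v1 v1e v1i1] /subsetPn[u ue ui1]].
have e0 : e != set0 by apply/set0Pn; exists v1.
have [vlo [vhi [vlo_e vhi_e ext]]] := exists_extrema ply e0.
have levels_le : \sum_(3 <= t < #|I|.+1) crosses e (A :\: level t) <= ply vhi - 2.
  apply: sum_window_le => t /andP[t3 _] ct; rewrite t3.
  by apply: crosses_level_le ct => // v ve; case/andP: (ext v ve).
set K := [set l | meets e (D l)].
have hi_le_K : ply vhi <= #|K|.
  by apply: subset_leq_card; apply/subsetP => l; rewrite !inE => hl; apply/meetsP; exists vhi.
have others_cross l : l != i1 -> l \in K -> crosses e (D l).
  rewrite inE crossesE => li1 ->; apply/subsetPn; exists v1 => //.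
  exact: notin_private_part v1i1 li1.
have [ci1|nci1] := boolP (crosses e (D i1)).
  have : #|K| <= #|[set i | crosses e (D i)]|.
    apply: subset_leq_card; apply/subsetP => l lK; rewrite inE.
    by have [->|li1] := eqVneq l i1; last exact: others_cross.
  have : private_excess e <= #|K|.
    apply: leq_trans (geq_minr _ _) (subset_leq_card _); apply/subsetP => l.
    by rewrite !inE => /andP[ml _]; apply: meets_subset ml; apply: private_part_sub.
  have := geq_minl 2 #|[set i | crosses e (private_part i)]|; rewrite -/(private_excess e).
  lia.
have eDi1 : e \subset D i1.
  move: nci1; rewrite crossesE negb_and negbK => /orP[|//].
  by rewrite (meets_subset (private_part_sub i1)) //; apply/meetsP; exists v1.
have hi_gt1 : 1 < ply vhi.
  apply: leq_trans (ply_gt1 (subsetP eDi1 u ue) ui1) _.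
  by case/andP: (ext u ue).
have : private_excess e <= 1.
  apply: leq_trans (geq_minr _ _) _; rewrite -(cards1 i1); apply: subset_leq_card.
  apply/subsetP => i; rewrite !inE => /andP[/meetsP[v ve vi] _].
  by rewrite (in_private_part_eq vi (subsetP eDi1 v ve)).
have : #|K :\ i1| <= #|[set i | crosses e (D i)]|.
  apply: subset_leq_card; apply/subsetP => l; rewrite !inE => /andP[li1 lK].
  by apply: others_cross; rewrite ?inE.
have := cardsD1 i1 K; lia.
Qed.

(* Uncrossing the [A :\: D i] yields every level t >= 1; the two lowest levels
   are traded for [private_excess e], the crossings of the two private partitions. *)
Lemma excess_levels_le e : 2 <= #|I| ->
  private_excess e + \sum_(3 <= t < #|I|.+1) crosses e (A :\: level t)
    <= \sum_i crosses e (A :\: D i).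
Proof.
move=> I2; rewrite sum_boolE.
have [eA|eA] := boolP (meets e A); last first.
  have no_cross (X : {set V}) : X \subset A -> crosses e X = false.
    by move=> XA; apply: contraNF eA => /andP[/(meets_subset XA)].
  rewrite private_excess_eq0; last by apply/existsPn => i; rewrite no_cross ?private_part_subA.
  by rewrite big1 // => t _; rewrite no_cross ?subsetDl.
have [eOut|] := boolP (meets e (~: A)); first exact: excess_levels_le_outer.
rewrite meetsC negbK => eA'.
have -> : [set i | crosses e (A :\: D i)] = [set i | crosses e (D i)].
  by apply/setP => i; rewrite !inE crosses_setD.
have [/existsP[i1 ci1]|no_private] := boolP [exists i, crosses e (private_part i)].
  exact: excess_levels_le_inner ci1.
rewrite private_excess_eq0 // add0n; apply: levels_le_inner => //.
by case/meetsP: eA => v ve _; apply/set0Pn; exists v.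
Qed.

End Ply.

Section ExtendPartition.
Variables (V : finType) (j : nat) (F : 'I_j -> {set V}).
Hypothesis F_disjoint : forall l l' : 'I_j, l != l' -> [disjoint F l & F l'].

Definition extend_partition (i : 'I_j.+1) : {set V} :=
  if unlift ord_max i is Some l then F l else ~: \bigcup_l F l.

Lemma extend_partition_lift l : extend_partition (lift ord_max l) = F l.
Proof. by rewrite /extend_partition liftK. Qed.

Lemma extend_partition_max : extend_partition ord_max = ~: \bigcup_l F l.
Proof. by rewrite /extend_partition unlift_none. Qed.

Lemma extend_partition_disjoint (i i' : 'I_j.+1) :
  i != i' -> [disjoint extend_partition i & extend_partition i'].
Proof.
have Fmax l : [disjoint F l & ~: \bigcup_l F l].
  by rewrite disjoints_subset setCK (bigcup_sup l).
case: (unliftP ord_max i) => [l ->|->]; case: (unliftP ord_max i') => [l' ->|->];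
  rewrite ?extend_partition_lift ?extend_partition_max => ii'.
- by apply: F_disjoint; apply: contraNneq ii' => ->.
- exact: Fmax.
- by rewrite disjoint_sym; apply: Fmax.
- by rewrite eqxx in ii'.
Qed.

Lemma extend_partition_is_kpartition x0 :
  (forall l, F l != set0) -> (forall l, x0 \notin F l) -> is_kpartition extend_partition.
Proof.
move=> F0 x0F; split; [|split; first exact: extend_partition_disjoint].
  move=> i; case: (unliftP ord_max i) => [l ->|->].
    by rewrite extend_partition_lift.
  rewrite extend_partition_max; apply/set0Pn; exists x0; rewrite inE.
  by apply/bigcupP => [[l _]]; apply/negP.
apply/setP => v; rewrite inE; apply/bigcupP.
have [/bigcupP[l _ vl]|vF] := boolP (v \in \bigcup_l F l).
  by exists (lift ord_max l); rewrite ?extend_partition_lift.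
by exists ord_max; rewrite ?extend_partition_max ?inE.
Qed.

Lemma extend_partition_crossed e :
  2 <= #|[set i | e :&: extend_partition i != set0]| -> exists l, crosses e (F l).
Proof.
have cross l i : lift ord_max l != i -> e :&: F l != set0 ->
    e :&: extend_partition i != set0 -> crosses e (F l).
  move=> li el /set0Pn[w /setIP[we wi]]; rewrite crossesE /meets el.
  apply/subsetPn; exists w => //.
  have := extend_partition_disjoint li; rewrite extend_partition_lift disjoint_sym.
  by rewrite disjoints_subset => /subsetP/(_ w wi); rewrite inE.
case/card_gt1P => i [i' []]; rewrite !inE => ei ei' ii'.
case: (unliftP ord_max i) ei ii' => [l -> | ->] ei ii'.
  by exists l; apply: cross ii' _ ei'; rewrite -(extend_partition_lift l).
case: (unliftP ord_max i') ei' ii' => [l' -> | ->] ei' ii'; last by rewrite eqxx in ii'.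
by exists l'; apply: cross ei; [rewrite eq_sym | rewrite -(extend_partition_lift l')].
Qed.

End ExtendPartition.

Section TwoPartitions.
Variables (V : finType) (E : seq {set V}) (j : nat) (A : {set V}).
Variable D : bool * 'I_j -> {set V}.
Hypothesis DA : forall i, D i \subset A.

Definition private_partition (s : bool) : 'I_j.+1 -> {set V} :=
  extend_partition (fun l => private_part D (s, l)).

Lemma private_part_row_disjoint s (l l' : 'I_j) :
  l != l' -> [disjoint private_part D (s, l) & private_part D (s, l')].
Proof. by move=> ll'; apply: private_part_disjoint; rewrite xpair_eqE eqxx. Qed.

Lemma private_partition_is_kpartition x0 s :
  (forall i, private_part D i != set0) -> (forall i, x0 \notin private_part D i) ->
  is_kpartition (private_partition s).
Proof.
by move=> D0 x0D; apply: (extend_partition_is_kpartition (private_part_row_disjoint s)).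
Qed.

Lemma private_partition_crossed_le e :
  (2 <= #|[set i | e :&: private_partition false i != set0]|)
  + (2 <= #|[set i | e :&: private_partition true i != set0]|) <= private_excess D e.
Proof.
rewrite /private_excess; set C := [set i | crosses e (private_part D i)].
have cross s := extend_partition_crossed (private_part_row_disjoint s).
have [/cross[l0 c0]|_] := boolP (2 <= _); have [/cross[l1 c1]|_] := boolP (2 <= _) => //=.
- have : 1 < #|C| by apply/card_gt1P; exists (false, l0), (true, l1); rewrite !inE c0 c1.
  by rewrite leq_min.
- have : 0 < #|C| by rewrite card_gt0; apply/set0Pn; exists (false, l0); rewrite inE.
  by rewrite leq_min.
- have : 0 < #|C| by rewrite card_gt0; apply/set0Pn; exists (true, l1); rewrite inE.
  by rewrite leq_min.
Qed.

Lemma kcost_private_partitions_le : 0 < j ->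
  kcost E (private_partition false) + kcost E (private_partition true)
    + \sum_(3 <= t < (2 * j).+1) dcut E (A :\: level D t)
    <= \sum_i dcut E (A :\: D i).
Proof.
move=> j0; have cardI : #|{: bool * 'I_j}| = 2 * j by rewrite card_prod card_bool card_ord.
rewrite /kcost !count_sumE.
rewrite (eq_bigr (fun t => \sum_(e <- E) crosses e (A :\: level D t))); last first.
  by move=> t _; apply: dcut_sumE.
rewrite [X in _ <= X](eq_bigr (fun i => \sum_(e <- E) crosses e (A :\: D i))); last first.
  by move=> i _; apply: dcut_sumE.
rewrite exchange_big [X in _ <= X]exchange_big -!big_split /=.
apply: leq_sum => e _.
apply: leq_trans (excess_levels_le DA e _); last by rewrite cardI; lia.
by rewrite -cardI; apply: leq_add (private_partition_crossed_le e) (leqnn _).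
Qed.

Lemma exists_cheap_private_partition b : 0 < j ->
  (forall i, dcut E (A :\: D i) <= b) ->
  (forall t, 3 <= t -> b <= dcut E (A :\: level D t)) ->
  exists s, kcost E (private_partition s) <= b.
Proof.
move=> j0 D_le level_ge; have := kcost_private_partitions_le j0.
have : \sum_i dcut E (A :\: D i) <= 2 * j * b.
  apply: (@leq_trans (\sum_(i : bool * 'I_j) b)); first by apply: leq_sum => i _.
  by rewrite sum_nat_const card_prod card_bool card_ord.
have : (2 * j - 2) * b <= \sum_(3 <= t < (2 * j).+1) dcut E (A :\: level D t).
  rewrite -[2 * j - 2]/((2 * j).+1 - 3) -sum_nat_const_nat.
  rewrite big_nat_cond [X in _ <= X]big_nat_cond.
  by apply: leq_sum => t /andP[/andP[t3 _] _]; apply: level_ge.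
have -> : 2 * j * b = (2 * j - 2) * b + 2 * b by rewrite -mulnDl subnK //; lia.
have [k0|k0] := leqP (kcost E (private_partition false)) b; first by exists false.
by exists true; lia.
Qed.

End TwoPartitions.

Lemma exists_injective_in (I T : finType) (H : {set T}) :
  #|I| <= #|H| -> exists2 h : I -> T, injective h & forall i, h i \in H.
Proof.
move=> IH; exists (fun i => enum_val (widen_ord IH (enum_rank i))) => [i i'|i].
  by move=> /enum_val_inj/(congr1 val) /= /ord_inj/enum_rank_inj.
exact: enum_valP.
Qed.

Section Hitting.
Variables (V : finType) (E : seq {set V}) (A R : {set V}) (b : nat).
Implicit Types (X H : {set V}).

Definition removable X := [&& X != set0, X \subset R & dcut E (A :\: X) <= b].
Definition hitting H := (H \subset R) && [forall X, removable X ==> (X :&: H != set0)].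

Lemma hittingP H :
  reflect (H \subset R /\ forall X, removable X -> X :&: H != set0) (hitting H).
Proof.
apply: (iffP andP) => [[HR /forallP hitH]|[HR hitH]]; split => //.
  by move=> X; apply/implyP/hitH.
by apply/forallP => X; apply/implyP/hitH.
Qed.

Lemma min_hitting_witness H h : hitting H -> (forall H', hitting H' -> #|H| <= #|H'|) ->
  h \in H -> exists2 X, removable X & X :&: H = [set h].
Proof.
move=> /hittingP[HR hitH] Hmin hH.
have : ~~ hitting (H :\ h) by apply/negP => /Hmin; rewrite (cardsD1 h H) hH; lia.
rewrite /hitting (subset_trans (subD1set H h) HR) negb_forall => /existsP[X].
rewrite negb_imply negbK => /andP[rX /eqP XHh]; exists X => //.
have only_h v : v \in X -> v \in H -> v = h.
  move=> vX vH; have : v \notin X :&: (H :\ h) by rewrite XHh inE.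
  by rewrite !inE vX vH !andbT negbK => /eqP.
case/set0Pn: (hitH X rX) => v /setIP[vX vH].
apply/setP => w; rewrite !inE; apply/andP/eqP => [[wX wH]|->]; first exact: only_h.
by rewrite -(only_h v vX vH).
Qed.

Lemma private_witnesses (I : finType) H :
  hitting H -> (forall H', hitting H' -> #|H| <= #|H'|) -> #|I| <= #|H| ->
  exists D : I -> {set V}, [/\ forall i, removable (D i),
    forall i, private_part D i != set0 & forall t, 1 < t -> level D t :&: H = set0].
Proof.
move=> hitH Hmin /exists_injective_in[h h_inj hH].
have /fin_all_exists[D DP] i : exists D, removable D /\ D :&: H = [set h i].
  by have [X rX XH] := min_hitting_witness hitH Hmin (hH i); exists X.
have D_H i v : v \in D i -> v \in H -> v = h i.
  by move=> vD vH; apply/set1P; rewrite -(proj2 (DP i)) inE vD vH.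
exists D; split=> [i|i|t t1]; first exact: (proj1 (DP i)).
  apply/set0Pn; exists (h i); rewrite inE.
  have hDi : h i \in D i by have := set11 (h i); rewrite -(proj2 (DP i)) => /setIP[].
  rewrite hDi andbT; apply/bigcupP => -[l li /D_H /(_ (hH i)) /h_inj il].
  by rewrite il eqxx in li.
apply/setP => v; rewrite !inE; apply/andP => -[vt vH].
have /card_gt1P[i [i' [vi vi' ii']]] : 1 < ply D v := leq_trans t1 vt.
rewrite !inE in vi vi'.
by move: ii'; rewrite (h_inj _ _ (etrans (esym (D_H i v vi vH)) (D_H i' v vi' vH))) eqxx.
Qed.

Lemma unhit_dcut_ge H X : hitting H -> b <= dcut E A ->
  X \subset R -> X :&: H = set0 -> b <= dcut E (A :\: X).
Proof.
move=> /hittingP[_ hitH] bA XR XH.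
have [->|X0] := eqVneq X set0; first by rewrite setD0.
have : ~~ removable X by apply/negP => /hitH; rewrite XH eqxx.
by rewrite /removable X0 XR /= -ltnNge => /ltnW.
Qed.

Lemma small_hitting_set_or_cheap_partition j x0 :
  0 < j -> R \subset A -> x0 \notin R -> b <= dcut E A ->
  (exists H, [/\ H \subset R, #|H| <= (2 * j).-1 & forall X, removable X -> X :&: H != set0])
  \/ (exists Q : 'I_j.+1 -> {set V},
        [/\ is_kpartition Q, kcost E Q <= b & forall l, Q (lift ord_max l) \subset R]).
Proof.
move=> j0 RA x0R bA.
have hitR : hitting R by apply/hittingP; split=> // X /and3P[X0 XR _]; rewrite (setIidPl XR).
have [H hitH Hmin] := @arg_minnP _ R hitting (fun H => #|H|) hitR.
have [small|large] := leqP #|H| (2 * j).-1.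
  by left; exists H; case/hittingP: hitH.
right; have : #|{: bool * 'I_j}| <= #|H| by rewrite card_prod card_bool card_ord; lia.
case/(private_witnesses hitH Hmin) => D [Drem Dpriv Dlevel].
have DR i : D i \subset R by case/and3P: (Drem i).
have DA i : D i \subset A := subset_trans (DR i) RA.
have privR i : private_part D i \subset R := subset_trans (private_part_sub D i) (DR i).
have [|t t3|s cheap] := exists_cheap_private_partition (E := E) DA (b := b) j0.
- by move=> i; case/and3P: (Drem i).
- by apply: unhit_dcut_ge hitH bA (level_sub DR _) (Dlevel t _); lia.
exists (private_partition D s); split => // [|l].
  apply: (private_partition_is_kpartition (x0 := x0)) => // i.
  by apply: contra x0R; apply/subsetP/privR.
by rewrite /private_partition extend_partition_lift.
Qed.

End Hitting.

Lemma lt_half_neq_ord_max j (i : 'I_j.+1) : i < j.+1./2 -> i != ord_max.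
Proof.
move=> ih; rewrite -val_eqE /= neq_ltn; apply/orP; left.
by apply: leq_trans ih _; rewrite leq_half_double; lia.
Qed.

Section Split.
Variables (V : finType) (E : seq {set V}).
Implicit Types (A R H S T U Y : {set V}).

Lemma hitting_superset A R b H Y :
  (forall X, removable E A R b X -> X :&: H != set0) ->
  A :\: R \subset Y -> H \subset Y -> dcut E (Y :&: A) <= b -> A \subset Y.
Proof.
move=> hitH ARY HY YAb; rewrite -setD_eq0; apply: contraT => AY0.
have AYR : A :\: Y \subset R.
  apply/subsetP => v; rewrite inE => /andP[vY vA]; apply: contraNT vY => vR.
  by apply: (subsetP ARY); rewrite inE vR.
have /set0Pn[v /setIP[vAY vH]] : (A :\: Y) :&: H != set0.
  by apply: hitH; rewrite /removable AY0 AYR setDDr setDv set0U setIC.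
by move: vAY; rewrite inE (subsetP HY v vH).
Qed.

Lemma source_minimal_by_uncrossing S T U : terminal_cut S T U ->
  (forall Y, S \subset Y -> dcut E (Y :&: U) <= dcut E U -> U \subset Y) ->
  (forall Y, Y \subset ~: T -> dcut E (Y :|: U) < dcut E U -> Y \subset U) ->
  source_minimal_min_terminal_cut E S T U.
Proof.
move=> Ucut Spin Tpin.
have Umin Y : terminal_cut S T Y -> dcut E U <= dcut E Y.
  move=> [_ [_ [SY YT]]]; have := dcut_submod E Y U.
  have : dcut E U <= dcut E (Y :&: U).
    rewrite leqNgt; apply/negP => cut_lt.
    have UY := Spin Y SY (ltnW cut_lt).
    by rewrite (setIidPr UY) ltnn in cut_lt.
  have : dcut E U <= dcut E (Y :|: U).
    rewrite leqNgt; apply/negP => cut_lt.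
    have YU := Tpin Y YT cut_lt.
    by rewrite (setUidPr YU) ltnn in cut_lt.
  lia.
split=> [|Y [[_ [_ [SY _]]] Ymin] /properP[YU [v vU vY]]]; first by split.
have UY : U \subset Y by apply: Spin SY _; rewrite (setIidPl YU); apply: Ymin.
by rewrite (subsetP UY) in vY.
Qed.

Lemma balanced_split_dcut_le k U (Q : 'I_k -> {set V}) :
  balanced_split E k U -> is_kpartition Q -> dcut E U <= kcost E Q.
Proof.
by move=> [P [[Pp Pmin] ->]] Qp; apply: leq_trans (dcut_bigcup_le_kcost _ _ Pp) (Pmin Q Qp).
Qed.

Lemma balanced_split_not_full k U : 0 < k -> balanced_split E k U -> exists t0, t0 \notin U.
Proof.
case: k => // j _ [P [[[P0 [Pdisj _]] _] ->]].
have /set0Pn[t0 t0P] := P0 ord_max; exists t0.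
apply/bigcupP => -[i /lt_half_neq_ord_max ij ti].
by have := Pdisj i ord_max ij; rewrite disjoints_subset => /subsetP/(_ t0 ti); rewrite inE t0P.
Qed.

Lemma minimal_split_source_terminals k U u0 :
  2 <= k -> minimal_balanced_split E k U -> u0 \in U ->
  exists S, [/\ S \subset U :\ u0, #|S| <= 2 * k - 3 &
    forall Y, u0 |: S \subset Y -> dcut E (Y :&: U) <= dcut E U -> U \subset Y].
Proof.
case: k => // j j1 [Usplit Umin] u0U.
have u0R : u0 \notin U :\ u0 by rewrite setD11.
have [[S [SR Scard hitS]]|[Q [Qp Qcost QR]]] :=
  small_hitting_set_or_cheap_partition (E := E) (b := dcut E U) j1
    (subD1set U u0) u0R (leqnn _).
  exists S; split=> [||Y]; [done | lia | rewrite subUset => /andP[u0Y SY] YU].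
  apply: hitting_superset hitS _ SY YU; apply: subset_trans u0Y.
  by rewrite setDDr setDv set0U subsetIr.
exfalso; apply: Umin; exists (\bigcup_(i < j.+1 | i < j.+1./2) Q i); split.
  exists Q; split=> //; split=> // Q' Q'p.
  exact: leq_trans Qcost (balanced_split_dcut_le Usplit Q'p).
apply: sub_proper_trans (properD1 u0U); apply/bigcupsP => i /lt_half_neq_ord_max.
by case: (unliftP ord_max i) => [l ->|->]; [move=> _; apply: QR | rewrite eqxx].
Qed.

Lemma split_sink_terminals k U t0 :
  2 <= k -> balanced_split E k U -> t0 \notin U ->
  exists T, [/\ T \subset ~: U, #|T| <= 2 * k - 2 &
    forall Y, Y \subset ~: T -> dcut E (Y :|: U) < dcut E U -> Y \subset U].
Proof.
case: k => // j j1 Usplit t0U.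
have t0R : t0 \notin ~: U :\ t0 by rewrite setD11.
have t0T : [set t0] \subset ~: U by rewrite sub1set inE.
have [c0|c_pos] := posnP (dcut E U).
  by exists [set t0]; split=> [||Y _]; rewrite ?cards1 ?c0 //; lia.
have cut_le : (dcut E U).-1 <= dcut E (~: U) by rewrite dcutC leq_pred.
have [[T [TR Tcard hitT]]|[Q [Qp Qcost _]]] :=
  small_hitting_set_or_cheap_partition (E := E) (b := (dcut E U).-1) j1
    (subD1set (~: U) t0) t0R cut_le; last first.
  by have := balanced_split_dcut_le Usplit Qp; lia.
exists (t0 |: T); split=> [||Y].
- by rewrite subUset t0T (subset_trans TR (subD1set _ _)).
- by have := cardsU1 t0 T; lia.
rewrite subsetC subUset => /andP[t0Y TY] YU; rewrite -setCS.
apply: hitting_superset hitT _ TY _.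
  by apply: subset_trans t0Y; rewrite setDDr setDv set0U subsetIr.
by rewrite -setCU dcutC; lia.
Qed.

End Split.

Theorem theorem5p3 (V : finType) (E : seq {set V}) (k : nat) (U : {set V}) :
  2 <= k ->
  minimal_balanced_split E k U ->
  forall u0 : V, u0 \in U ->
  exists S T : {set V},
    [/\ S \subset U :\ u0, T \subset ~: U,
        #|S| <= 2 * k - 3, #|T| <= 2 * k - 2 &
        source_minimal_min_terminal_cut E (u0 |: S) T U].
Proof.
move=> k2 Umin u0 u0U; have Usplit := proj1 Umin.
have [t0 t0U] := balanced_split_not_full (ltnW k2) Usplit.
have [S [SU Scard Spin]] := minimal_split_source_terminals k2 Umin u0U.
have [T [TU Tcard Tpin]] := split_sink_terminals k2 Usplit t0U.
exists S, T; split=> //; apply: source_minimal_by_uncrossing Spin Tpin.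
split; first by apply/set0Pn; exists u0.
split; first by apply: contraNneq t0U => ->.
by rewrite subUset sub1set u0U (subset_trans SU (subD1set U u0)) subsetC.
Qed.
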